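(* Let $K>0$, let $H_1,H_2$ be real Hilbert spaces, let $B=H_1\times H_2$ with the symmetric bilinear form $\lfloor (x_1,x_2),(y_1,y_2)\rfloor=K^2\langle x_1,y_1\rangle_{H_1}-\langle x_2,y_2\rangle_{H_2}$, and let $q(b)=\frac12\lfloor b,b\rfloor$. Then: (1) a nonempty set $A\subset B$ is $q$-positive if and only if $A$ is the graph of a $K$-Lipschitz mapping $f:P_{H_1}(A)\to H_2$, where $P_{H_1}(A)=\{x_1:\exists x_2,\ (x_1,x_2)\in A\}$; (2) a set $A\subset B$ is maximally $q$-positive if and only if $A$ is the graph of a $K$-Lipschitz mapping $f:H_1\to H_2$.
   Context: A nonempty $A\subset B$ is $q$-positive if $q(b-c)\ge0$ for all $b,c\in A$; maximally $q$-positive if $q$-positive and not properly contained in another $q$-positive set. A mapping $f:D\to H_2$, $D\subset H_1$, is $K$-Lipschitz if $\|f(x)-f(y)\|_{H_2}\le K\|x-y\|_{H_1}$ for all $x,y\in D$. *)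

From HB Require Import structures.
From mathcomp Require Import all_boot all_order all_algebra.
From mathcomp Require Import all_classical all_reals all_analysis.
Set Implicit Arguments. Unset Strict Implicit. Unset Printing Implicit Defensive.
Import Order.TTheory GRing.Theory Num.Theory.
Import numFieldNormedType.Exports.
Local Open Scope classical_set_scope.
Local Open Scope ring_scope.

(* [ip] is an inner product on the complete normed space [V] inducing its
   norm: then V (with ip) is a real Hilbert space. *)
Definition is_inner_product {R : realType} {V : completeNormedModType R}
  (ip : V -> V -> R) : Prop :=
  [/\ forall x y, ip x y = ip y x,
      forall (a : R) x y z, ip (a *: x + y) z = a * ip x z + ip y z
    & forall x, `|x| ^+ 2 = ip x x].

Definition q_positive {R : realType} {B : zmodType} (q : B -> R) (A : set B) : Prop :=
  A !=set0 /\ forall b c, A b -> A c -> 0 <= q (b - c).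

Definition max_q_positive {R : realType} {B : zmodType} (q : B -> R) (A : set B) : Prop :=
  q_positive q A /\ forall A', q_positive q A' -> A `<=` A' -> A' = A.

Definition lfloor_form {R : realType} {H1 H2 : completeNormedModType R}
  (ip1 : H1 -> H1 -> R) (ip2 : H2 -> H2 -> R) (K : R)
  (b c : (H1 * H2)%type) : R :=
  K ^+ 2 * ip1 b.1 c.1 - ip2 b.2 c.2.

Definition qform {R : realType} {H1 H2 : completeNormedModType R}
  (ip1 : H1 -> H1 -> R) (ip2 : H2 -> H2 -> R) (K : R)
  (b : (H1 * H2)%type) : R :=
  2^-1 * lfloor_form ip1 ip2 K b b.

Definition Klipschitz_on {R : realType} {H1 H2 : normedModType R}
  (K : R) (D : set H1) (f : H1 -> H2) : Prop :=
  forall x y, D x -> D y -> `|f x - f y| <= K * `|x - y|.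

Definition projH1 {H1 H2 : Type} (A : set (H1 * H2)) : set H1 :=
  [set x1 | exists x2, A (x1, x2)].

Definition graph_on {H1 H2 : Type} (D : set H1) (f : H1 -> H2) : set (H1 * H2) :=
  [set p | D p.1 /\ p.2 = f p.1].

From HB Require Import structures.
From mathcomp Require Import all_boot all_order all_algebra.
From mathcomp Require Import all_classical all_reals all_analysis.
From mathcomp Require Import ring lra.
Import Order.TTheory GRing.Theory Num.Theory.
Import numFieldNormedType.Exports.
Local Open Scope classical_set_scope.
Local Open Scope ring_scope.

(* Since [q (b - c) = (K^2 |b.1 - c.1|^2 - |b.2 - c.2|^2) / 2], q-positivity of A
   says exactly that A is the graph of a K-Lipschitz map on its projection.  What
   remains is that a maximal such graph is defined everywhere, i.e. Kirszbraun's
   one-point extension in Hilbert spaces: given a K-Lipschitz set A and a point x,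
   find y with |y - b.2| <= K |x - b.1| for all b in A.

   For a finitely supported probability measure mu on A, let its defect be
   Var_mu(b.2) - K^2 E_mu |b.1 - x|^2.  Writing variances as mean squared pairwise
   distances shows that the defect is nonpositive, and the parallelogram law shows
   that it is uniformly concave along the mean m(mu) of b.2: mixing mu and nu with
   weights 1 - t and t adds t (1 - t) |m(mu) - m(nu)|^2 to the mixed defects.  Hence
   the means along a maximizing sequence are Cauchy, and their limit y satisfies
   |y - m(nu)|^2 <= sup defect - defect(nu) for every nu; the Dirac mass at b gives
   |y - b.2|^2 <= K^2 |x - b.1|^2. *)

Section InnerProduct.
Context {R : realType} {V : completeNormedModType R} {ip : V -> V -> R}.
Hypothesis hip : is_inner_product ip.

Lemma ipC x y : ip x y = ip y x.
Proof. by case: hip. Qed.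

Lemma ipDl x y z : ip (x + y) z = ip x z + ip y z.
Proof. by case: hip => _ hlin _; rewrite -{1}[x]scale1r hlin mul1r. Qed.

Lemma ip0l z : ip 0 z = 0.
Proof. by have := ipDl 0 0 z; rewrite addr0; lra. Qed.

Lemma ipZl a x z : ip (a *: x) z = a * ip x z.
Proof. by case: hip => _ hlin _; rewrite -[a *: x]addr0 hlin ip0l addr0. Qed.

Lemma ipDr x y z : ip z (x + y) = ip z x + ip z y.
Proof. by rewrite ipC ipDl !(ipC _ z). Qed.

Lemma ipZr a x z : ip z (a *: x) = a * ip z x.
Proof. by rewrite ipC ipZl ipC. Qed.

Lemma ipBl x y z : ip (x - y) z = ip x z - ip y z.
Proof. by rewrite -scaleN1r ipDl ipZl mulN1r. Qed.

Lemma ipBr x y z : ip z (x - y) = ip z x - ip z y.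
Proof. by rewrite ipC ipBl !(ipC _ z). Qed.

Lemma ip_suml (I : Type) (r : seq I) (F : I -> V) z :
  ip (\sum_(i <- r) F i) z = \sum_(i <- r) ip (F i) z.
Proof. exact: (big_morph (ip^~ z) (fun x y => ipDl x y z) (ip0l z)). Qed.

Lemma ip_sumr (I : Type) (r : seq I) (F : I -> V) z :
  ip z (\sum_(i <- r) F i) = \sum_(i <- r) ip z (F i).
Proof. by rewrite ipC ip_suml; apply: eq_bigr => i _; rewrite ipC. Qed.

Lemma ipxx x : ip x x = `|x| ^+ 2.
Proof. by case: hip. Qed.

Lemma sqr_normB x y : `|x - y| ^+ 2 = `|x| ^+ 2 - 2 * ip x y + `|y| ^+ 2.
Proof. by rewrite -!ipxx ipBl !ipBr (ipC y x); ring. Qed.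

End InnerProduct.

(* A finitely supported measure on [T] is a list of (point, weight) pairs.  [wvar]
   is the variance only when the total weight is 1. *)
Section WeightedSums.
Context {R : realType} {T : eqType}.
Implicit Types (s : seq (T * R)) (t : R) (A : set T).

Definition wsum s (F : T -> R) : R := \sum_(p <- s) p.2 * F p.1.

Definition wmean {V : lmodType R} s (F : T -> V) : V := \sum_(p <- s) p.2 *: F p.1.

Definition mix t s s' : seq (T * R) :=
  [seq (p.1, (1 - t) * p.2) | p <- s] ++ [seq (p.1, t * p.2) | p <- s'].

Definition fprob_on A s : Prop :=
  (forall p, p \in s -> A p.1 /\ 0 <= p.2) /\ wsum s (fun=> 1) = 1.

Lemma wsum_mix t s s' F :
  wsum (mix t s s') F = (1 - t) * wsum s F + t * wsum s' F.
Proof.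
by rewrite /wsum big_cat !big_map !mulr_sumr; congr (_ + _);
  apply: eq_bigr => p _; rewrite mulrA.
Qed.

Lemma wmean_mix {V : lmodType R} t s s' (F : T -> V) :
  wmean (mix t s s') F = (1 - t) *: wmean s F + t *: wmean s' F.
Proof.
by rewrite /wmean big_cat !big_map !scaler_sumr; congr (_ + _);
  apply: eq_bigr => p _; rewrite scalerA.
Qed.

Lemma wsum_dirac x F : wsum [:: (x, 1)] F = F x.
Proof. by rewrite /wsum big_seq1 mul1r. Qed.

Lemma wmean_dirac {V : lmodType R} x (F : T -> V) : wmean [:: (x, 1)] F = F x.
Proof. by rewrite /wmean big_seq1 scale1r. Qed.

Lemma fprob_on_mix A t s s' :
  0 <= t <= 1 -> fprob_on A s -> fprob_on A s' -> fprob_on A (mix t s s').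
Proof.
move=> /andP[t0 t1] [sA s1] [s'A s'1]; split; last by rewrite wsum_mix s1 s'1; ring.
move=> p; rewrite mem_cat => /orP[] /mapP[q qs ->] /=.
  by have [Aq q0] := sA q qs; split; rewrite // mulr_ge0 // subr_ge0.
by have [Aq q0] := s'A q qs; split; rewrite // mulr_ge0.
Qed.

Lemma fprob_on_dirac A x : A x -> fprob_on A [:: (x, 1)].
Proof. by move=> Ax; split=> [p|]; rewrite ?wsum_dirac // mem_seq1 => /eqP ->. Qed.

Definition wvar {V : normedModType R} s (F : T -> V) : R :=
  wsum s (fun i => `|F i| ^+ 2) - `|wmean s F| ^+ 2.

End WeightedSums.

Section Variance.
Context {R : realType} {T : eqType} {V : completeNormedModType R} {ip : V -> V -> R}.
Hypothesis hip : is_inner_product ip.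
Implicit Types (s : seq (T * R)) (F : T -> V) (t : R).

Lemma wvar_mix t s s' F :
  wvar (mix t s s') F = (1 - t) * wvar s F + t * wvar s' F
                        + t * (1 - t) * `|wmean s F - wmean s' F| ^+ 2.
Proof.
rewrite /wvar wsum_mix wmean_mix -!(ipxx hip).
rewrite !(ipBl hip, ipBr hip) !(ipDl hip, ipDr hip, ipZl hip, ipZr hip).
by rewrite (ipC hip (wmean s' F)); ring.
Qed.

Lemma wvar_pairwise s F : wsum s (fun=> 1) = 1 ->
  2 * wvar s F = \sum_(p <- s) \sum_(q <- s) p.2 * q.2 * `|F p.1 - F q.1| ^+ 2.
Proof.
move=> s1; have W1 : \sum_(q <- s) q.2 = 1.
  by rewrite -s1; apply: eq_bigr => q _; rewrite mulr1.
have cross : `|wmean s F| ^+ 2 =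
    \sum_(p <- s) \sum_(q <- s) p.2 * q.2 * ip (F p.1) (F q.1).
  rewrite -(ipxx hip) (ip_suml hip); apply: eq_bigr => p _.
  rewrite (ipZl hip) (ip_sumr hip) mulr_sumr; apply: eq_bigr => q _.
  by rewrite (ipZr hip) mulrA.
have diagl : \sum_(p <- s) \sum_(q <- s) p.2 * q.2 * `|F p.1| ^+ 2 =
    wsum s (fun i => `|F i| ^+ 2).
  apply: eq_bigr => p _; under eq_bigr do rewrite mulrAC.
  by rewrite -mulr_sumr W1 mulr1.
have diagr : \sum_(p <- s) \sum_(q <- s) p.2 * q.2 * `|F q.1| ^+ 2 =
    wsum s (fun i => `|F i| ^+ 2).
  rewrite exchange_big -diagl; apply: eq_bigr => p _.
  by apply: eq_bigr => q _; rewrite (mulrC q.2).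
have -> : 2 * wvar s F = wsum s (fun i => `|F i| ^+ 2) + wsum s (fun i => `|F i| ^+ 2)
                         - 2 * `|wmean s F| ^+ 2 by rewrite /wvar; ring.
rewrite -{1}diagl -diagr cross -big_split /= mulr_sumr -sumrB; apply: eq_bigr => p _.
rewrite -big_split /= mulr_sumr -sumrB; apply: eq_bigr => q _.
by rewrite (sqr_normB hip); ring.
Qed.

End Variance.

Lemma wvar_le_lipschitz {R : realType} {T : eqType} {U V : completeNormedModType R}
    {ipU : U -> U -> R} {ipV : V -> V -> R} (K : R) (A : set T) (s : seq (T * R))
    (a : T -> U) (c : T -> V) :
  is_inner_product ipU -> is_inner_product ipV -> fprob_on A s ->
  (forall i j, A i -> A j -> `|c i - c j| <= K * `|a i - a j|) ->
  wvar s c <= K ^+ 2 * wvar s a.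
Proof.
move=> hipU hipV [sA s1] cL; rewrite -(@ler_pM2l _ 2) // mulrCA.
rewrite !(wvar_pairwise hipU, wvar_pairwise hipV) // mulr_sumr.
rewrite big_seq [leRHS]big_seq; apply: ler_sum => p ps.
rewrite mulr_sumr big_seq [leRHS]big_seq; apply: ler_sum => q qs.
have [[Ap p0] [Aq q0]] := (sA p ps, sA q qs).
rewrite [leRHS]mulrCA; apply: ler_wpM2l; first exact: mulr_ge0.
have cpq := cL _ _ Ap Aq.
by rewrite -exprMn ler_sqr ?nnegrE // (le_trans (normr_ge0 _) cpq).
Qed.

Lemma ler_of_onem_mulr {R : realFieldType} (x y : R) :
  (forall t, 0 < t < 1 -> (1 - t) * x <= y) -> x <= y.
Proof.
move=> xy; apply/ler_addgt0Pr => e e0.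
have x0 := normr_ge0 x; have xe : 0 < `|x| + e + 1 by lra.
pose t := e / (`|x| + e + 1).
have te : t * (`|x| + e + 1) = e by rewrite /t divfK // gt_eqF.
have t0 : 0 < t by rewrite /t divr_gt0.
have t1 : t < 1 by rewrite /t ltr_pdivrMr // mul1r; lra.
have := xy t (introT andP (conj t0 t1)); have := ler_norm x; nra.
Qed.

(* Mixing a near-maximizer with [v] gains at most [M - f v]; when [v] is another
   near-maximizer this makes [g] of a maximizing sequence Cauchy. *)
Lemma uniformly_concave_center {R : realType} {T : Type}
    {V : completeNormedModType R} (P : set T) (f : T -> R) (g : T -> V) (M : R) :
  (forall t u v, 0 < t < 1 -> P u -> P v ->
     (1 - t) * f u + t * f v + t * (1 - t) * `|g u - g v| ^+ 2 <= M) ->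
  (forall e, 0 < e -> exists2 u, P u & M - e < f u) ->
  exists y, forall v, P v -> `|y - g v| ^+ 2 <= M - f v.
Proof.
move=> concave approx; pose e := @harmonic R.
have /choice [u uP] n : exists u, P u /\ M - e n < f u.
  by have [u Pu fu] := approx _ (harmonic_gt0 n); exists u.
have key t v n : 0 < t < 1 -> P v ->
    t * (1 - t) * `|g (u n) - g v| ^+ 2 <= (1 - t) * e n + t * (M - f v).
  move=> t01 Pv; have [Pun fu] := uP n; have := concave t _ _ t01 Pun Pv.
  by move: t01 => /andP[t0 t1]; nra.
have gu_dist n m : `|g (u n) - g (u m)| ^+ 2 < 2 * (e n + e m).
  have half : 0 < (2^-1 : R) < 1 by apply/andP; split; lra.
  have [Pum fum] := uP m; have := key _ _ n half Pum; lra.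
have cvg_gu : cvg (g \o u @ \oo).
  apply/cauchy_cvgP/cauchy_exP => d d0.
  have [N _ eN] : \forall n \near \oo, e n < d ^+ 2 / 4.
    by apply: cvgr_lt; [exact: cvg_harmonic | rewrite divr_gt0 ?exprn_gt0].
  exists (g (u N)); exists N => // n /= Nn; rewrite -ball_normE /=.
  rewrite -ltr_sqr ?nnegrE ?normr_ge0 ?ltW //.
  by apply: lt_trans (gu_dist N n) _; have := eN N (leqnn N); have := eN n Nn; lra.
exists (lim (g \o u @ \oo)) => v Pv; apply: ler_of_onem_mulr => t t01.
move: (t01) => /andP[t0 t1]; rewrite -(ler_pM2l t0) mulrA.
apply: (@ler_cvg_to _ \oo _ _ (fun n => t * (1 - t) * `|g (u n) - g v| ^+ 2)
  (fun n => (1 - t) * e n + t * (M - f v))); last by apply: nearW => n; exact: key.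
  apply: cvgM; first exact: cvg_cst.
  by apply: cvgM; apply: cvg_norm; apply: cvgB => //; exact: cvg_cst.
rewrite -[X in _ --> X]add0r; apply: cvgD; last exact: cvg_cst.
by rewrite -(mulr0 (1 - t)); apply: cvgM; [exact: cvg_cst | exact: cvg_harmonic].
Qed.

Definition Klipschitz_set {R : realType} {H1 H2 : normedModType R} (K : R)
  (A : set (H1 * H2)) : Prop :=
  forall b c, A b -> A c -> `|b.2 - c.2| <= K * `|b.1 - c.1|.

Section OnePointExtension.
Context {R : realType} {H1 H2 : completeNormedModType R}
  {ip1 : H1 -> H1 -> R} {ip2 : H2 -> H2 -> R}.
Hypotheses (hip1 : is_inner_product ip1) (hip2 : is_inner_product ip2).
Variables (K : R) (x : H1).
Implicit Types (A : set (H1 * H2)) (s : seq ((H1 * H2) * R)).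

Definition defect s : R :=
  wvar s (fun b : H1 * H2 => b.2) - K ^+ 2 * wsum s (fun b => `|b.1 - x| ^+ 2).

Lemma defect_mix t s s' :
  defect (mix t s s') = (1 - t) * defect s + t * defect s' +
    t * (1 - t) * `|wmean s (fun b => b.2) - wmean s' (fun b => b.2)| ^+ 2.
Proof. by rewrite /defect (wvar_mix hip2) wsum_mix; ring. Qed.

Lemma defect_dirac b : defect [:: (b, 1)] = - (K ^+ 2 * `|b.1 - x| ^+ 2).
Proof. by rewrite /defect /wvar !wsum_dirac wmean_dirac; ring. Qed.

Lemma defect_le0 A s : Klipschitz_set K A -> fprob_on A s -> defect s <= 0.
Proof.
move=> AL sA.
have cL b c : A b -> A c -> `|b.2 - c.2| <= K * `|(b.1 - x) - (c.1 - x)|.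
  by rewrite opprB addrA subrK; exact: AL.
have := wvar_le_lipschitz K A s (fun b => b.1 - x) (fun b => b.2) hip1 hip2 sA cL.
rewrite /defect /wvar.
have := sqr_ge0 K; have := sqr_ge0 `|wmean s (fun b => b.1 - x)|; nra.
Qed.

Lemma Klipschitz_set_extend A : 0 <= K -> Klipschitz_set K A ->
  exists y, forall b, A b -> `|y - b.2| <= K * `|x - b.1|.
Proof.
move=> K0 AL; have [[b0 Ab0]|A0] := pselect (A !=set0); last first.
  by exists 0 => b Ab; exfalso; apply: A0; exists b.
pose D := [set defect s | s in fprob_on A].
have D0 : D !=set0.
  by exists (defect [:: (b0, 1)]), [:: (b0, 1)]; first exact: fprob_on_dirac.
have Dle0 : ubound D 0 by move=> _ [s sA <-]; exact: defect_le0 AL sA.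
have Dsup : has_sup D by split; last by exists 0.
have [y yP] : exists y, forall s, fprob_on A s ->
    `|y - wmean s (fun b => b.2)| ^+ 2 <= sup D - defect s.
  apply: uniformly_concave_center => [t s s' /andP[t0 t1] sA s'A | e e0].
    rewrite -defect_mix; apply: sup_upper_bound => //; exists (mix t s s') => //.
    by apply: fprob_on_mix => //; rewrite !ltW.
  by have [_ [s sA <-] es] := sup_adherent e0 Dsup; exists s.
exists y => b Ab; have := yP _ (fprob_on_dirac _ _ Ab).
rewrite wmean_dirac defect_dirac (distrC x) => yb.
rewrite -ler_sqr ?nnegrE ?mulr_ge0 // exprMn.
by have := ge_sup D0 Dle0; lra.
Qed.

End OnePointExtension.

Section Graphs.
Context {R : realType} {H1 H2 : normedModType R} (K : R).
Implicit Types (A : set (H1 * H2)) (f : H1 -> H2).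

Lemma Klipschitz_set_fun A u v v' :
  Klipschitz_set K A -> A (u, v) -> A (u, v') -> v = v'.
Proof.
move=> AL Av Av'; have := AL _ _ Av Av'; rewrite /= subrr normr0 mulr0.
by rewrite normr_le0 subr_eq0 => /eqP.
Qed.

Lemma Klipschitz_setP A : Klipschitz_set K A <->
  exists f, Klipschitz_on K (projH1 A) f /\ A = graph_on (projH1 A) f.
Proof.
split=> [AL | [f [fL ->]] b c]; last first.
  by case=> Db -> [Dc ->]; apply: fL.
pose f u := xget 0 [set v | A (u, v)].
have fP u v : A (u, v) -> A (u, f u) by exact: (@xgetI _ 0 [set v | A (u, v)] v).
exists f; split=> [u u' [v Av] [v' Av'] | ].
  exact: AL (fP _ _ Av) (fP _ _ Av').
apply/seteqP; split=> [[u v] Av | [u v] [[v' Av'] /= ->]]; last exact: fP Av'.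
by split; [exists v | exact: Klipschitz_set_fun AL Av (fP _ _ Av)].
Qed.

End Graphs.

Section QPositive.
Context {R : realType} {H1 H2 : completeNormedModType R}
  {ip1 : H1 -> H1 -> R} {ip2 : H2 -> H2 -> R} {K : R}.
Hypotheses (hK : 0 < K) (hip1 : is_inner_product ip1) (hip2 : is_inner_product ip2).
Local Notation q := (qform ip1 ip2 K).
Implicit Types (A : set (H1 * H2)) (f : H1 -> H2).

Lemma qform_subr_ge0 b c : (0 <= q (b - c)) = (`|b.2 - c.2| <= K * `|b.1 - c.1|).
Proof.
rewrite /qform /lfloor_form /= (ipxx hip1) (ipxx hip2) pmulr_rge0 ?invr_gt0 //.
by rewrite subr_ge0 -exprMn ler_sqr ?nnegrE // mulr_ge0 // ltW.
Qed.

Lemma q_positiveE A : q_positive q A <-> A !=set0 /\ Klipschitz_set K A.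
Proof.
by split=> -[A0 AL]; split=> // b c Ab Ac; move: (AL b c Ab Ac); rewrite qform_subr_ge0.
Qed.

Lemma max_q_positive_projT A : max_q_positive q A -> projH1 A = setT.
Proof.
move=> [/q_positiveE[A0 AL] Amax]; apply/seteqP; split=> // u _.
have [v vP] := Klipschitz_set_extend hip1 hip2 K u A (ltW hK) AL.
have AvL : Klipschitz_set K (A `|` [set (u, v)]).
  move=> b c [Ab|->] [Ac|->] /=; rewrite ?subrr ?normr0 ?mulr0 //; first exact: AL.
    by rewrite distrC (distrC b.1); exact: vP.
  exact: vP.
have AvQ : q_positive q (A `|` [set (u, v)]).
  by apply/q_positiveE; split=> //; exists (u, v); right.
by rewrite -(Amax _ AvQ (@subsetUl _ _ _)); exists v; right.
Qed.

Lemma graph_max_q_positive f :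
  Klipschitz_on K setT f -> max_q_positive q (graph_on setT f).
Proof.
move=> fL; have GL : Klipschitz_set K (graph_on setT f).
  by move=> b c [_ ->] [_ ->]; apply: fL.
split=> [|A' /q_positiveE[_ A'L] GA'].
  by apply/q_positiveE; split=> //; exists (0, f 0).
apply/seteqP; split=> // -[u v] A'v; split=> //=.
by apply: Klipschitz_set_fun A'L A'v _; apply: GA'.
Qed.

End QPositive.

Theorem mainTheorem17 (R : realType) (K : R) (H1 H2 : completeNormedModType R)
  (ip1 : H1 -> H1 -> R) (ip2 : H2 -> H2 -> R)
  (hK : 0 < K) (hip1 : is_inner_product ip1) (hip2 : is_inner_product ip2) :
  (forall A : set (H1 * H2)%type, A !=set0 ->
     (q_positive (qform ip1 ip2 K) A <->
      exists f : H1 -> H2,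
        Klipschitz_on K (projH1 A) f /\ A = graph_on (projH1 A) f))
  /\
  (forall A : set (H1 * H2)%type,
     max_q_positive (qform ip1 ip2 K) A <->
     exists f : H1 -> H2,
       Klipschitz_on K setT f /\ A = graph_on setT f).
Proof.
split=> A.
  by move=> A0; rewrite (q_positiveE hK hip1 hip2) -Klipschitz_setP; tauto.
split=> [Amax | [f [fL ->]]]; last exact: graph_max_q_positive.
have [_ AL] := proj1 (q_positiveE hK hip1 hip2 A) Amax.1.
have [f [fL Af]] := proj1 (Klipschitz_setP K A) AL.
by exists f; rewrite -(max_q_positive_projT hK hip1 hip2 _ Amax).
Qed.
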